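(* For any algorithm for preference-based RL with trajectory preferences, there exists a $\tilde d_{\mathbb{P}}$-dimensional linear mixture MDP with a $\tilde d_{\mathbb{T}}$-dimensional linear preference function such that the regret incurred by this algorithm over $K$ episodes is at least $\Omega(\tilde d_{\mathbb{P}}\sqrt{K}+\tilde d_{\mathbb{T}}\sqrt{K})$.
   Context: Preference-based RL: episodic MDP $(\mathcal{S},\mathcal{A},H,\mathbb{P})$ with fixed initial state $s_1$, no rewards, trajectories $\tau=(s_1,a_1,\dots,s_H,a_H)\in\mathrm{Traj}$, $\Pi$ the set of history-dependent policies. In each episode $k=1,\dots,K$ the agent runs two policies $\pi_{k,1},\pi_{k,2}$, obtains trajectories $\tau_{k,1},\tau_{k,2}$, and observes $o_k\sim\mathrm{Bernoulli}(\mathbb{T}(\tau_{k,1},\tau_{k,2}))$, where $\mathbb{T}:\mathrm{Traj}\times\mathrm{Traj}\to[0,1]$ is an unknown preference function with $\mathbb{T}(\tau_1,\tau_2)+\mathbb{T}(\tau_2,\tau_1)=1$. $\mathbb{T}(\pi_1,\pi_2)=\mathbb{E}_{\tau_1\sim(\mathbb{P},\pi_1),\tau_2\sim(\mathbb{P},\pi_2)}\mathbb{T}(\tau_1,\tau_2)$; it is assumed there is $\pi^*$ with $\mathbb{T}(\pi^*,\pi_0)\ge\frac12$ for all $\pi_0\in\Pi$; regret $Reg(K)=\sum_{k=1}^K\sum_{i=1}^2(\mathbb{T}(\pi^*,\pi_{k,i})-\frac12)$. A $\tilde d_{\mathbb{P}}$-dimensional linear mixture MDP has $\mathbb{P}(s'|s,a)=\psi(s,a,s')^\top\theta$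 with known $\psi:\mathcal{S}\times\mathcal{A}\times\mathcal{S}\to\mathbb{R}^{\tilde d_{\mathbb{P}}}$ satisfying $\|\sum_{s'}\psi(s,a,s')V(s')\|_2\le1$ for all $V:\mathcal{S}\to[0,1]$ and unknown bounded $\theta$; a $\tilde d_{\mathbb{T}}$-dimensional linear preference function is $\mathbb{T}(\tau_1,\tau_2)=\phi(\tau_1,\tau_2)^\top\vartheta$ for a known feature map $\phi:\mathrm{Traj}\times\mathrm{Traj}\to\mathbb{R}^{\tilde d_{\mathbb{T}}}$ and unknown bounded $\vartheta$. *)

From mathcomp Require Import all_boot all_order all_algebra.
From mathcomp Require Import reals.
Set Implicit Arguments. Unset Strict Implicit. Unset Printing Implicit Defensive.
Import Order.TTheory GRing.Theory Num.Theory.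
Local Open Scope ring_scope.

Section PbRL.
Variable R : realType.
Variables (S A : finType) (H : nat).

Definition Traj := (H.-tuple (S * A))%type.

(* history-dependent (within an episode) stochastic policy:
   pi past s a = probability of action a in current state s, given the
   previous state-action pairs [past] of the current episode. *)
Definition policy := seq (S * A) -> S -> A -> R.

Definition valid_policy (pi : policy) : Prop :=
  forall past s, (forall a, 0 <= pi past s a) /\ \sum_a pi past s a = 1.

(* transition kernel P s a s' = P(s'|s,a) *)
Definition kernel := S -> A -> S -> R.

Definition valid_kernel (P : kernel) : Prop :=
  forall s a, (forall s', 0 <= P s a s') /\ \sum_s' P s a s' = 1.

Fixpoint trans_prob (P : kernel) (x : S * A) (rest : seq (S * A)) : R :=
  match rest with
  | [::] => 1
  | y :: r => P x.1 x.2 y.1 * trans_prob P y r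
  end.

Fixpoint pol_prob (pi : policy) (past : seq (S * A)) (rest : seq (S * A)) : R :=
  match rest with
  | [::] => 1
  | y :: r => pi past y.1 y.2 * pol_prob pi (rcons past y) r
  end.

Definition traj_prob (P : kernel) (s1 : S) (pi : policy) (tau : Traj) : R :=
  match val tau with
  | [::] => 1
  | x :: r => (x.1 == s1)%:R * trans_prob P x r * pol_prob pi [::] (x :: r)
  end.

Definition prefT := Traj -> Traj -> R.

Definition valid_pref (T : prefT) : Prop :=
  forall t1 t2, 0 <= T t1 t2 <= 1 /\ T t1 t2 + T t2 t1 = 1.

Definition pref_pol (P : kernel) (s1 : S) (T : prefT) (pi1 pi2 : policy) : R :=
  \sum_(t1 : Traj) \sum_(t2 : Traj)
     traj_prob P s1 pi1 t1 * traj_prob P s1 pi2 t2 * T t1 t2.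

Definition is_winner (P : kernel) (s1 : S) (T : prefT) (pis : policy) : Prop :=
  valid_policy pis /\
  forall pi0, valid_policy pi0 -> 1 / 2%:R <= pref_pol P s1 T pis pi0.

(* data observed in one episode: (tau_{k,1}, tau_{k,2}, o_k) *)
Definition episode_data := (Traj * Traj * bool)%type.

(* a (deterministic given its seed) algorithm: from the past data, the pair of
   policies (pi_{k,1}, pi_{k,2}) to run in the next episode *)
Definition algo := seq episode_data -> (policy * policy).

Fixpoint exp_regret_from (P : kernel) (s1 : S) (T : prefT) (pis : policy)
  (alg : algo) (n : nat) (hist : seq episode_data) : R :=
  match n with
  | 0 => 0
  | n'.+1 =>
    let pp := alg hist in
    (pref_pol P s1 T pis pp.1 - 1 / 2%:R) + (pref_pol P s1 T pis pp.2 - 1 / 2%:R)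
    + \sum_(t1 : Traj) \sum_(t2 : Traj)
        traj_prob P s1 pp.1 t1 * traj_prob P s1 pp.2 t2 *
        (T t1 t2 * exp_regret_from P s1 T pis alg n' (rcons hist (t1, t2, true))
         + (1 - T t1 t2) * exp_regret_from P s1 T pis alg n' (rcons hist (t1, t2, false)))
  end.

(* E[Reg(K)] for a randomized algorithm: seed u ~ mu, then run alg u *)
Definition exp_regret (U : finType) (mu : U -> R) (alg : U -> algo)
  (P : kernel) (s1 : S) (T : prefT) (pis : policy) (K : nat) : R :=
  \sum_u mu u * exp_regret_from P s1 T pis (alg u) K [::].

Definition dotr (d : nat) (u v : 'rV[R]_d) : R := \sum_(i < d) u 0 i * v 0 i.
Definition sqnorm (d : nat) (u : 'rV[R]_d) : R := \sum_(i < d) u 0 i ^+ 2.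

Definition lin_mix (d : nat) (psi : S -> A -> S -> 'rV[R]_d) (theta : 'rV[R]_d)
  : kernel := fun s a s' => dotr (psi s a s') theta.

Definition psi_normalized (d : nat) (psi : S -> A -> S -> 'rV[R]_d) : Prop :=
  forall s a (V : S -> R), (forall s', 0 <= V s' <= 1) ->
    sqnorm (\sum_s' V s' *: psi s a s') <= 1.

Definition lin_pref (d : nat) (phi : Traj -> Traj -> 'rV[R]_d) (vt : 'rV[R]_d)
  : prefT := fun t1 t2 => dotr (phi t1 t2) vt.

End PbRL.

(* Assouad's method.  The hard instances are indexed by pairs of sign vectors
   th = (th_P, th_T) in {-1,1}^(dP-1) x {-1,1}^(dT-1); the horizon is 2, states
   are bits and actions are themselves such pairs a.  From the initial state the
   next state is 1 with probability 1/2 + eta <th_P, a_P>, and trajectories are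
   compared through the score g(tau) = [s_2 = 1]/8 + eta <th_T, a_T>/8 of their
   first action a and second state s_2, with T(tau, tau') = 1/2 + g(tau) - g(tau').
   Both are linear in (1, th_P) and (1, th_T).  The policy playing a = th is a
   Condorcet winner, and any policy loses eta/4 for each coordinate on which its
   first action disagrees with th.  Flipping one coordinate of th moves every
   transition and preference probability by at most 2 eta, so the chi-square
   divergence between the laws of k episodes stays small while 576 k eta^2 <= 1:
   the algorithm cannot tell th from its flip, and on average over th it gets
   half of the dP + dT - 2 coordinates wrong in every episode.  With
   eta = 1/(24 sqrt K) the regret is at least K eta (dP + dT - 2)/8, of order
   (dP + dT) sqrt K. *)

From mathcomp Require Import all_boot all_order all_algebra.
From mathcomp Require Import reals.
From mathcomp Require Import ring lra zify.
From Stdlib Require Import FunctionalExtensionality.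
Set Implicit Arguments. Unset Strict Implicit. Unset Printing Implicit Defensive.
Import Order.TTheory GRing.Theory Num.Theory.
Local Open Scope ring_scope.

Lemma tuple2_eta (X : Type) (t : 2.-tuple X) : t = [tuple tnth t ord0; tnth t ord_max].
Proof. by apply: val_inj; case: t => -[|x [|y []]]. Qed.

Lemma sum_tuple2 (V : nmodType) (X : finType) (F : 2.-tuple X -> V) :
  \sum_t F t = \sum_x \sum_y F [tuple x; y].
Proof.
rewrite pair_bigA (reindex (fun p : X * X => [tuple p.1; p.2])) /=.
  by apply: eq_bigr => -[].
by exists (fun t => (tnth t ord0, tnth t ord_max)) => [[]|t _] //; rewrite -tuple2_eta.
Qed.

Lemma sum_pair (V : nmodType) (X Y : finType) (F : X * Y -> V) :
  \sum_p F p = \sum_x \sum_y F (x, y).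
Proof. by rewrite pair_bigA; apply: eq_bigr => -[]. Qed.

Lemma sum_pair_bool (V : nmodType) (X Y : finType) (F : X * Y * bool -> V) :
  \sum_e F e = \sum_x \sum_y (F (x, y, true) + F (x, y, false)).
Proof.
rewrite sum_pair sum_pair; apply: eq_bigr => x _; apply: eq_bigr => y _.
by rewrite big_bool.
Qed.

Lemma sum_indicator_mul (R : nzSemiRingType) (X : finType) (x0 : X) (F : X -> R) :
  \sum_x (x == x0)%:R * F x = F x0.
Proof.
rewrite (bigD1 x0) //= eqxx mul1r big1 ?addr0 // => x /negbTE ->.
by rewrite mul0r.
Qed.

Lemma mul_sqr_div (F : fieldType) (x y : F) : x != 0 -> x * (y / x) ^+ 2 = y ^+ 2 / x.
Proof. by move=> x_neq0; field. Qed.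

Section RealFieldFacts.
Variable R : realFieldType.

Lemma bernoulli_chi2_le (p q d : R) : 1/4 <= p <= 3/4 -> -d <= q - p <= d ->
  q ^+ 2 / p + (1 - q) ^+ 2 / (1 - p) <= 1 + 6 * d ^+ 2.
Proof.
move=> /andP[p_ge p_le] /andP[d_ge d_le].
have p_neq0 : p != 0 by apply/eqP => p0; lra.
have p'_neq0 : 1 - p != 0 by apply/eqP => p1; lra.
have -> : q ^+ 2 / p + (1 - q) ^+ 2 / (1 - p) = 1 + (q - p) ^+ 2 / (p * (1 - p)).
  by field; apply/andP.
have var_gt0 : 0 < p * (1 - p) by apply: mulr_gt0; lra.
rewrite lerD2l ler_pdivrMr //.
have : (q - p) ^+ 2 <= d ^+ 2 by rewrite !expr2; nra.
have : 3 / 16 <= p * (1 - p) by nra.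
have : 0 <= d ^+ 2 by exact: sqr_ge0.
nra.
Qed.

Lemma expr_1D_le (g : R) n : 0 <= g -> n%:R * g <= 1 / 2 -> (1 + g) ^+ n <= 1 + 2 * n%:R * g.
Proof.
move=> g_ge0; elim: n => [|n IHn] ng; first by rewrite mulr0 mul0r addr0.
rewrite -natr1 in ng *; have ng' : n%:R * g <= 1 / 2 by nra.
have := ler_wpM2l (_ : 0 <= 1 + g) (IHn ng'); rewrite -exprS.
have : 0 <= n%:R * g by rewrite mulr_ge0 ?ler0n.
by nra.
Qed.

Lemma exists_ge_average (I : finType) (i0 : I) (V : I -> R) (b : R) :
  #|{: I}|%:R * b <= \sum_i V i -> exists i, b <= V i.
Proof.
move=> avg; have [/existsP[i]|/existsPn V_lt] := boolP [exists i, b <= V i]; first by exists i.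
suff : \sum_i V i < \sum_(i : I) b by rewrite sumr_const -mulr_natl; lra.
apply: ltr_sum; first by apply/hasP; exists i0; rewrite ?mem_index_enum.
by move=> i _; rewrite ltNge; exact: V_lt.
Qed.

End RealFieldFacts.

Section SignVectors.
Variables (R : realFieldType) (m : nat).
Implicit Types (x y : {ffun 'I_m -> bool}) (b c : bool).

Definition sgb b : R := if b then 1 else -1.

Definition corr x y : R := \sum_j sgb (x j) * sgb (y j).

Definition flip_at (j : 'I_m) x : {ffun 'I_m -> bool} :=
  [ffun j' => if j' == j then ~~ x j' else x j'].

Lemma sqr_sgb b : sgb b ^+ 2 = 1.
Proof. by case: b; rewrite /sgb expr2 ?mulrNN mulr1. Qed.

Lemma sgb_mul b c : sgb b * sgb c = 1 - 2 * (b != c)%:R.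
Proof. by case: b; case: c; rewrite /sgb /=; lra. Qed.

Lemma corr_bound x y : - m%:R <= corr x y <= m%:R.
Proof.
have sgb_mul_bound j : -1 <= sgb (x j) * sgb (y j) <= 1.
  by case: (x j); case: (y j); rewrite /sgb /=; lra.
have lo : \sum_(j < m) (-1 : R) <= corr x y.
  by apply: ler_sum => j _; have /andP[] := sgb_mul_bound j.
have hi : corr x y <= \sum_(j < m) (1 : R).
  by apply: ler_sum => j _; have /andP[] := sgb_mul_bound j.
by move: lo hi; rewrite !sumr_const card_ord -mulNrn => lo hi; apply/andP.
Qed.

Lemma corr_self_sub x y : corr x x - corr x y = 2 * \sum_j (x j != y j)%:R.
Proof. by rewrite -sumrB mulr_sumr; apply: eq_bigr => j _; rewrite !sgb_mul eqxx /=; ring. Qed.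

Lemma flip_at_id j x : flip_at j x j = ~~ x j.
Proof. by rewrite ffunE eqxx. Qed.

Lemma flip_atK j : involutive (flip_at j).
Proof. by move=> x; apply/ffunP => k; rewrite !ffunE; case: eqP => // _; exact: negbK. Qed.

Lemma corr_flip_at j x y : -2 <= corr (flip_at j x) y - corr x y <= 2.
Proof.
rewrite /corr -sumrB (bigD1 j) //= big1 => [|k /negbTE k_neq_j]; last first.
  by rewrite ffunE k_neq_j subrr.
by rewrite addr0 flip_at_id -mulrBl; case: (x j); case: (y j); rewrite /sgb /=; lra.
Qed.

End SignVectors.
Arguments sgb {R}.
Arguments corr {R m}.

Section SequentialExpectation.
Variables (R : realFieldType) (E : finType).
Implicit Types (st rho : seq E -> E -> R) (h : seq E) (f g : seq E -> R).

(* [expect_lr st rho n h w F] runs [n] more steps of the process with step law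
   [st] from history [h] and averages [F h' w'], where [w'] is [w] times the
   product of the ratios [rho] along the continuation [h'] of [h]. *)
Fixpoint expect_lr st rho n h (w : R) (F : seq E -> R -> R) : R :=
  if n is n'.+1 then \sum_e st h e * expect_lr st rho n' (rcons h e) (w * rho h e) F
  else F h w.

Definition expect st n h f : R := expect_lr st (fun _ _ => 1) n h 1 (fun h _ => f h).

Lemma expect_lr_weightless st rho n h w f :
  expect_lr st rho n h w (fun h _ => f h) = expect st n h f.
Proof.
rewrite /expect; move: {2}1 => w'.
elim: n h w w' => [//|n IHn] h w w' /=.
by apply: eq_bigr => e _; rewrite (IHn _ _ (w' * 1)).
Qed.

Lemma expectS st n h f :
  expect st n.+1 h f = \sum_e st h e * expect st n (rcons h e) f.
Proof. by apply: eq_bigr => e _; rewrite mulr1. Qed.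

Lemma eq_expect_lr st rho n h w (F G : seq E -> R -> R) :
  (forall h v, F h v = G h v) -> expect_lr st rho n h w F = expect_lr st rho n h w G.
Proof.
move=> FG; elim: n h w => [|n IHn] h w /=; first exact: FG.
by apply: eq_bigr => e _; rewrite IHn.
Qed.

Lemma expect_lr_lin st rho n h w a (F G : seq E -> R -> R) :
  expect_lr st rho n h w (fun h v => a * F h v + G h v) =
  a * expect_lr st rho n h w F + expect_lr st rho n h w G.
Proof.
elim: n h w => [//|n IHn] h w /=.
by rewrite mulr_sumr -big_split; apply: eq_bigr => e _ /=; rewrite IHn; ring.
Qed.

Lemma eq_expect st n h f g : (forall h, f h = g h) -> expect st n h f = expect st n h g.
Proof. by move=> fg; apply: eq_expect_lr => h' _; exact: fg. Qed.

Lemma expect_lin st n h a f g :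
  expect st n h (fun h => a * f h + g h) = a * expect st n h f + expect st n h g.
Proof. exact: expect_lr_lin. Qed.

Lemma expectZ st n h a f : expect st n h (fun h => a * f h) = a * expect st n h f.
Proof.
elim: n h => [//|n IHn] h; rewrite !expectS mulr_sumr.
by apply: eq_bigr => e _; rewrite IHn; ring.
Qed.

Lemma expect_sum (I : finType) st n h (F : I -> seq E -> R) :
  expect st n h (fun h => \sum_i F i h) = \sum_i expect st n h (F i).
Proof.
elim: n h => [//|n IHn] h; rewrite expectS.
under eq_bigr do rewrite IHn mulr_sumr.
by rewrite exchange_big; apply: eq_bigr => i _; rewrite expectS.
Qed.

Section StochasticStep.
Variable st : seq E -> E -> R.
Hypothesis st_ge0 : forall h e, 0 <= st h e.
Hypothesis st_sum1 : forall h, \sum_e st h e = 1.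

Lemma expect_lr_cst rho n h w c : expect_lr st rho n h w (fun _ _ => c) = c.
Proof.
elim: n h w => [//|n IHn] h w /=.
by under eq_bigr do rewrite IHn; rewrite -mulr_suml st_sum1 mul1r.
Qed.

Lemma ler_expect_lr rho n h w (F G : seq E -> R -> R) :
  (forall h v, F h v <= G h v) -> expect_lr st rho n h w F <= expect_lr st rho n h w G.
Proof.
move=> FG; elim: n h w => [|n IHn] h w /=; first exact: FG.
by apply: ler_sum => e _; apply: ler_wpM2l.
Qed.

Lemma expect_cst n h c : expect st n h (fun _ => c) = c.
Proof. exact: expect_lr_cst. Qed.

Lemma ler_expect n h f g : (forall h, f h <= g h) -> expect st n h f <= expect st n h g.
Proof. by move=> fg; apply: ler_expect_lr => h' _; exact: fg. Qed.

Lemma expect_lr_sqr_le rho n h w F :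
  expect_lr st rho n h w F ^+ 2 <= expect_lr st rho n h w (fun h v => F h v ^+ 2).
Proof.
set m := expect_lr st rho n h w F.
have : 0 <= expect_lr st rho n h w (fun h v => (- 2 * m) * F h v + (1 * F h v ^+ 2 + m ^+ 2)).
  rewrite -(expect_lr_cst rho n h w 0); apply: ler_expect_lr => h' v /=.
  have -> : - 2 * m * F h' v + (1 * F h' v ^+ 2 + m ^+ 2) = (F h' v - m) ^+ 2 by ring.
  exact: sqr_ge0.
by rewrite !expect_lr_lin expect_lr_cst -/m; lra.
Qed.

Lemma expect_lr_weight_sqr_le rho n h w G :
  0 <= G -> (forall h, \sum_e st h e * rho h e ^+ 2 <= G) ->
  expect_lr st rho n h w (fun _ v => v ^+ 2) <= w ^+ 2 * G ^+ n.
Proof.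
move=> G0 stG; elim: n h w => [|n IHn] h w /=; first by rewrite mulr1.
apply: (@le_trans _ _ (\sum_e st h e * ((w * rho h e) ^+ 2 * G ^+ n))).
  by apply: ler_sum => e _; apply: ler_wpM2l.
rewrite (_ : \sum_e _ = w ^+ 2 * G ^+ n * \sum_e st h e * rho h e ^+ 2); last first.
  by rewrite mulr_sumr; apply: eq_bigr => e _; ring.
by rewrite (exprSr G) mulrA; apply: ler_wpM2l => //; rewrite mulr_ge0 ?sqr_ge0 ?exprn_ge0.
Qed.

Section ChangeOfMeasure.
Variables (rho st' : seq E -> E -> R).
Hypothesis st'E : forall h e, st' h e = st h e * rho h e.
Hypothesis st'_sum1 : forall h, \sum_e st' h e = 1.

Lemma expect_lr_change n h w f :
  expect_lr st rho n h w (fun h v => v * f h) = w * expect st' n h f.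
Proof.
elim: n h w => [//|n IHn] h w /=.
rewrite expectS mulr_sumr; apply: eq_bigr => e _.
by rewrite IHn st'E; ring.
Qed.

Lemma sqr_expect_change_le n h f G :
  0 <= G -> (forall h, \sum_e st h e * rho h e ^+ 2 <= G) ->
  (forall h, 0 <= f h <= 1) ->
  (expect st' n h f - expect st n h f) ^+ 2 <= G ^+ n - 1.
Proof.
move=> G0 stG f01.
(* With [L] the likelihood ratio, [E' f - E f = E[(L - 1) f]], whose square is
   at most [E[(L - 1)^2] = E[L^2] - 1]. *)
have -> : expect st' n h f - expect st n h f =
    expect_lr st rho n h 1 (fun h v => (v - 1) * f h).
  transitivity (expect_lr st rho n h 1 (fun h v => 1 * (v * f h) + (- 1 * f h))).
    by rewrite expect_lr_lin expect_lr_change expect_lr_weightless expectZ; ring.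
  by apply: eq_expect_lr => h' v; ring.
apply: (le_trans (expect_lr_sqr_le _ _ _ _ _)).
apply: (@le_trans _ _ (expect_lr st rho n h 1 (fun h v => (v - 1) ^+ 2))).
  apply: ler_expect_lr => h' v; rewrite exprMn -[X in _ <= X]mulr1.
  by apply: ler_wpM2l; rewrite ?sqr_ge0 // expr2; have := f01 h'; nra.
rewrite (@eq_expect_lr _ _ _ _ _ _ (fun h v => (-2) * (v * 1) + (1 * v ^+ 2 + 1))); last first.
  by move=> h' v; ring.
have st'1 : expect st' n h (fun _ => 1) = 1.
  elim: n h {stG} => [//|n IHn] h; rewrite expectS.
  by under eq_bigr do rewrite IHn mulr1.
rewrite !expect_lr_lin expect_lr_cst expect_lr_change st'1.
by have := expect_lr_weight_sqr_le n h 1 G0 stG; rewrite expr1n mul1r; lra.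
Qed.

End ChangeOfMeasure.
End StochasticStep.
End SequentialExpectation.

Section RegretUnrolling.
Variables (R : realType) (S A : finType) (H : nat).
Variables (P : kernel R S A) (s1 : S) (T : prefT R S A H) (pis : policy R S A).

Definition obs_prob (t1 t2 : Traj S A H) (o : bool) : R :=
  if o then T t1 t2 else 1 - T t1 t2.

Definition episode_prob (alg : algo R S A H) (hist : seq (episode_data S A H))
    (e : episode_data S A H) : R :=
  traj_prob P s1 (alg hist).1 e.1.1 * traj_prob P s1 (alg hist).2 e.1.2 *
  obs_prob e.1.1 e.1.2 e.2.

Definition duel_regret (pp : policy R S A * policy R S A) : R :=
  (pref_pol P s1 T pis pp.1 - 1 / 2%:R) + (pref_pol P s1 T pis pp.2 - 1 / 2%:R).

Lemma exp_regret_fromE alg n hist :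
  exp_regret_from P s1 T pis alg n hist =
  \sum_(k < n) expect (episode_prob alg) k hist (fun h => duel_regret (alg h)).
Proof.
elim: n hist => [|n IHn] hist; first by rewrite big_ord0.
rewrite big_ord_recl /=; congr (_ + _).
under [RHS]eq_bigr do rewrite expectS.
rewrite [RHS]exchange_big sum_pair_bool /=; apply: eq_bigr => t1 _; apply: eq_bigr => t2 _.
by rewrite -!mulr_sumr -!IHn /episode_prob /obs_prob /=; ring.
Qed.

End RegretUnrolling.

Section HorizonTwo.
Variables (R : realType) (S A : finType) (s1 : S).
Local Notation Tj := (Traj S A 2).
Implicit Types (P : kernel R S A) (pi : policy R S A).

Definition first_action (t : Tj) : A := (tnth t ord0).2.
Definition second_state (t : Tj) : S := (tnth t ord_max).1.

Lemma traj_prob2 P pi s a s' a' :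
  traj_prob P s1 pi [tuple (s, a); (s', a')] =
  (s == s1)%:R * P s a s' * pi [::] s a * pi [:: (s, a)] s' a'.
Proof. by rewrite /traj_prob /=; ring. Qed.

Lemma sum_traj_prob2 P pi (F : A -> S -> R) : valid_policy pi ->
  \sum_t traj_prob P s1 pi t * F (first_action t) (second_state t) =
  \sum_a pi [::] s1 a * \sum_s' P s1 a s' * F a s'.
Proof.
move=> pi_valid; rewrite sum_tuple2 sum_pair (bigD1 s1) //=.
rewrite [X in _ + X]big1 ?addr0 => [|s /negbTE s_neq]; last first.
  by apply: big1 => a _; apply: big1 => -[s' a'] _; rewrite traj_prob2 s_neq !mul0r.
apply: eq_bigr => a _; rewrite sum_pair mulr_sumr; apply: eq_bigr => s' _.
have [_ pi_sum1] := pi_valid [:: (s1, a)] s'.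
transitivity (pi [::] s1 a * P s1 a s' * F a s' * \sum_a' pi [:: (s1, a)] s' a').
  rewrite mulr_sumr; apply: eq_bigr => a' _.
  by rewrite traj_prob2 eqxx /first_action /second_state /=; ring.
by rewrite pi_sum1; ring.
Qed.

Section ValidKernel.
Variable P : kernel R S A.
Hypothesis P_valid : valid_kernel P.

Lemma traj_prob2_sum1 pi : valid_policy pi -> \sum_(t : Tj) traj_prob P s1 pi t = 1.
Proof.
move=> pi_valid; have := sum_traj_prob2 P (fun _ _ => 1) pi_valid.
under eq_bigr do rewrite mulr1; move=> ->.
have [_ pi_sum1] := pi_valid [::] s1; rewrite -[RHS]pi_sum1.
apply: eq_bigr => a _; under eq_bigr do rewrite mulr1.
by have [_ ->] := P_valid s1 a; rewrite mulr1.
Qed.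

Lemma traj_prob2_ge0 pi (t : Tj) : valid_policy pi -> 0 <= traj_prob P s1 pi t.
Proof.
move=> pi_valid; rewrite (tuple2_eta t).
case: (tnth t ord0) => s a; case: (tnth t ord_max) => s' a'.
have [pi0 _] := pi_valid [::] s; have [pi1 _] := pi_valid [:: (s, a)] s'.
have [P0 _] := P_valid s a.
by rewrite traj_prob2 !mulr_ge0 ?ler0n.
Qed.

Lemma pref_pol_score_diff (g : Tj -> R) pi1 pi2 :
  valid_policy pi1 -> valid_policy pi2 ->
  pref_pol P s1 (fun t1 t2 => 1 / 2 + g t1 - g t2) pi1 pi2 =
  1 / 2 + \sum_t traj_prob P s1 pi1 t * g t - \sum_t traj_prob P s1 pi2 t * g t.
Proof.
move=> pi1_valid pi2_valid; rewrite /pref_pol.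
transitivity (\sum_t1 traj_prob P s1 pi1 t1 *
  ((1 / 2 + g t1) * \sum_(t2 : Tj) traj_prob P s1 pi2 t2 - \sum_t2 traj_prob P s1 pi2 t2 * g t2)).
  by apply: eq_bigr => t1 _; rewrite mulrBr !mulr_sumr -sumrB; apply: eq_bigr => t2 _; ring.
rewrite traj_prob2_sum1 //.
transitivity ((1 / 2 - \sum_t2 traj_prob P s1 pi2 t2 * g t2) * \sum_(t1 : Tj) traj_prob P s1 pi1 t1
  + \sum_t1 traj_prob P s1 pi1 t1 * g t1).
  by rewrite mulr_sumr -big_split; apply: eq_bigr => t1 _ /=; ring.
by rewrite traj_prob2_sum1 //; ring.
Qed.

Variables (T : prefT R S A 2) (alg : algo R S A 2).
Hypothesis T_valid : valid_pref T.
Hypothesis alg_valid : forall h, valid_policy (alg h).1 /\ valid_policy (alg h).2.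

Lemma episode_prob_ge0 h e : 0 <= episode_prob P s1 T alg h e.
Proof.
have [pi1_valid pi2_valid] := alg_valid h; have [/andP[T_ge0 T_le1] _] := T_valid e.1.1 e.1.2.
rewrite /episode_prob /obs_prob !mulr_ge0 ?traj_prob2_ge0 //.
by case: e.2; rewrite ?subr_ge0.
Qed.

Lemma episode_prob_sum1 h : \sum_e episode_prob P s1 T alg h e = 1.
Proof.
have [pi1_valid pi2_valid] := alg_valid h.
rewrite sum_pair_bool -(traj_prob2_sum1 pi1_valid); apply: eq_bigr => t1 _.
rewrite -[RHS]mulr1 -(traj_prob2_sum1 pi2_valid) mulr_sumr; apply: eq_bigr => t2 _.
by rewrite /episode_prob /obs_prob /=; ring.
Qed.

End ValidKernel.
End HorizonTwo.

Lemma valid_kernel_false (R : realType) (A : finType) (P : kernel R bool A) s a :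
  valid_kernel P -> P s a false = 1 - P s a true.
Proof. by move=> /(_ s a) [_]; rewrite big_bool /=; lra. Qed.
Section EpisodeChiSquare.
Variables (R : realType) (A : finType) (s1 : bool) (d : R).
Variables (P P' : kernel R bool A) (T T' : prefT R bool A 2).
Local Notation Tj := (Traj bool A 2).
Hypotheses (P_valid : valid_kernel P) (P'_valid : valid_kernel P').
Hypothesis T_valid : valid_pref T.
Hypothesis P_bound : forall s a, 1/4 <= P s a true <= 3/4.
Hypothesis T_bound : forall t1 t2, 1/4 <= T t1 t2 <= 3/4.
Hypothesis P_close : forall s a, -d <= P' s a true - P s a true <= d.
Hypothesis T_close : forall t1 t2, -d <= T' t1 t2 - T t1 t2 <= d.

Definition traj_lr (t : Tj) : R :=
  P' s1 (first_action t) (second_state t) / P s1 (first_action t) (second_state t).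

Definition episode_lr (e : episode_data bool A 2) : R :=
  traj_lr e.1.1 * traj_lr e.1.2 * (obs_prob T' e.1.1 e.1.2 e.2 / obs_prob T e.1.1 e.1.2 e.2).

Lemma kernel_neq0 s a s' : P s a s' != 0.
Proof.
have /andP[? ?] := P_bound s a.
by case: s'; rewrite ?(valid_kernel_false _ _ P_valid); apply/eqP => P0; lra.
Qed.

Lemma obs_prob_neq0 t1 t2 o : obs_prob T t1 t2 o != 0.
Proof. by have := T_bound t1 t2; case: o => /andP[? ?]; apply/eqP => /= T0; lra. Qed.

Lemma traj_prob_lr pi t : traj_prob P' s1 pi t = traj_prob P s1 pi t * traj_lr t.
Proof.
rewrite (tuple2_eta t) /traj_lr /first_action /second_state.
case: (tnth t ord0) => s a; case: (tnth t ord_max) => s' a' /=.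
rewrite !traj_prob2; have P_neq0 := kernel_neq0 s1 a s'.
by have [->|_] := eqVneq s s1; [field | rewrite !mul0r].
Qed.

Lemma episode_prob_lr alg h e :
  episode_prob P' s1 T' alg h e = episode_prob P s1 T alg h e * episode_lr e.
Proof.
have := obs_prob_neq0 e.1.1 e.1.2 e.2.
by rewrite /episode_prob /episode_lr !traj_prob_lr => ?; field.
Qed.

Lemma traj_lr_chi2 pi : valid_policy pi ->
  \sum_t traj_prob P s1 pi t * traj_lr t ^+ 2 <= 1 + 6 * d ^+ 2.
Proof.
move=> pi_valid.
rewrite (sum_traj_prob2 s1 P (fun a s' => (P' s1 a s' / P s1 a s') ^+ 2) pi_valid).
have [pi_ge0 pi_sum1] := pi_valid [::] s1.
apply: (@le_trans _ _ (\sum_a pi [::] s1 a * (1 + 6 * d ^+ 2))); last first.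
  by rewrite -mulr_suml pi_sum1 mul1r.
apply: ler_sum => a _.
apply: ler_wpM2l => //; rewrite big_bool /= !mul_sqr_div ?kernel_neq0 //.
rewrite !(valid_kernel_false s1 a P_valid) (valid_kernel_false s1 a P'_valid).
exact: bernoulli_chi2_le.
Qed.

Lemma obs_lr_chi2 t1 t2 :
  \sum_o obs_prob T t1 t2 o * (obs_prob T' t1 t2 o / obs_prob T t1 t2 o) ^+ 2 <= 1 + 6 * d ^+ 2.
Proof.
have := obs_prob_neq0 t1 t2 true; have := obs_prob_neq0 t1 t2 false; rewrite /= => ? ?.
by rewrite big_bool /= !mul_sqr_div //; exact: bernoulli_chi2_le.
Qed.

Variable alg : algo R bool A 2.
Hypothesis alg_valid : forall h, valid_policy (alg h).1 /\ valid_policy (alg h).2.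

(* One chi-square factor for each of the two trajectories and one for the
   comparison. *)
Lemma episode_lr_chi2 h :
  \sum_e episode_prob P s1 T alg h e * episode_lr e ^+ 2 <= (1 + 6 * d ^+ 2) ^+ 3.
Proof.
have [pi1_valid pi2_valid] := alg_valid h.
pose chi2 pi (t : Tj) := traj_prob P s1 pi t * traj_lr t ^+ 2.
have chi2_ge0 pi t : valid_policy pi -> 0 <= chi2 pi t.
  by move=> pi_valid; rewrite mulr_ge0 ?sqr_ge0 ?traj_prob2_ge0.
apply: (@le_trans _ _ (\sum_t1 \sum_t2 chi2 (alg h).1 t1 * chi2 (alg h).2 t2 * (1 + 6 * d ^+ 2))).
  rewrite sum_pair_bool; apply: ler_sum => t1 _; apply: ler_sum => t2 _.
  rewrite /episode_prob /episode_lr /chi2 /=.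
  rewrite [leLHS](_ : _ = chi2 (alg h).1 t1 * chi2 (alg h).2 t2 *
     \sum_o obs_prob T t1 t2 o * (obs_prob T' t1 t2 o / obs_prob T t1 t2 o) ^+ 2).
    by apply: ler_wpM2l; [rewrite mulr_ge0 ?chi2_ge0 | exact: obs_lr_chi2].
  by rewrite big_bool /chi2 /=; ring.
rewrite [leLHS](_ : _ = (\sum_t1 chi2 (alg h).1 t1) * (\sum_t2 chi2 (alg h).2 t2) *
    (1 + 6 * d ^+ 2)); last first.
  by rewrite big_distrlr mulr_suml; apply: eq_bigr => t1 _; rewrite mulr_suml.
have G_ge0 : 0 <= 1 + 6 * d ^+ 2 by apply: addr_ge0 => //; apply: mulr_ge0 => //; exact: sqr_ge0.
set G := 1 + 6 * d ^+ 2 in G_ge0 *.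
rewrite (exprSr G 2) (expr2 G) ler_wpM2r //.
by apply: ler_pM; rewrite ?traj_lr_chi2 //; apply: sumr_ge0 => t _; apply: chi2_ge0.
Qed.

Lemma sqr_expect_episode_close k h f :
  (forall h, 0 <= f h <= 1) -> 144 * (k%:R * d ^+ 2) <= 1 ->
  (expect (episode_prob P' s1 T' alg) k h f - expect (episode_prob P s1 T alg) k h f) ^+ 2
    <= 1 / 4.
Proof.
move=> f01 kd2.
have g_ge0 : 0 <= 6 * d ^+ 2 by apply: mulr_ge0 => //; exact: sqr_ge0.
have G_ge0 : 0 <= (1 + 6 * d ^+ 2) ^+ 3 by rewrite exprn_ge0 // addr_ge0.
have := sqr_expect_change_le (episode_prob_ge0 s1 P_valid T_valid alg_valid)
  (episode_prob_sum1 s1 P_valid T alg_valid) (rho := fun _ e => episode_lr e)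
  (episode_prob_lr alg) (episode_prob_sum1 s1 P'_valid T' alg_valid) k h G_ge0
  episode_lr_chi2 f01.
(* [(1 + 6 d^2)^(3k) - 1 <= 36 k d^2 <= 1/4]. *)
have := @expr_1D_le _ (6 * d ^+ 2) (3 * k) g_ge0.
rewrite -exprM natrM; lra.
Qed.

End EpisodeChiSquare.

(* Both the actions and the parameters of the hard instances are pairs of sign
   vectors. *)
Definition sign_pair (mP mT : nat) := ({ffun 'I_mP -> bool} * {ffun 'I_mT -> bool})%type.

Section HardInstance.
Variables (R : realType) (mP mT : nat) (eta : R).
Hypothesis eta_gt0 : 0 < eta.
Hypothesis eta_mP : 24 * (eta * mP%:R) <= 1.
Hypothesis eta_mT : 24 * (eta * mT%:R) <= 1.
Local Notation Act := (sign_pair mP mT).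
Local Notation Tj := (Traj bool Act 2).
Implicit Types (th a : Act) (c : 'I_mP + 'I_mT) (pi : policy R bool Act).

Definition coord th c : bool := match c with inl j => th.1 j | inr i => th.2 i end.

Definition flip_coord th c : Act :=
  match c with inl j => (flip_at j th.1, th.2) | inr i => (th.1, flip_at i th.2) end.

Lemma coord_flip th c : coord (flip_coord th c) c = ~~ coord th c.
Proof. by case: c => j; rewrite /= flip_at_id. Qed.

Lemma flip_coordK c : involutive (flip_coord^~ c).
Proof. by case: c => j [x y]; rewrite /= flip_atK. Qed.

Lemma eta_corr_bound m (x y : {ffun 'I_m -> bool}) :
  24 * (eta * m%:R) <= 1 -> - (1/24) <= eta * corr x y <= 1/24.
Proof.
move=> eta_m; have /andP[lo hi] := corr_bound R x y.
have : eta * corr x y <= eta * m%:R by rewrite ler_wpM2l // ltW.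
have : eta * - m%:R <= eta * corr x y by rewrite ler_wpM2l // ltW.
by rewrite mulrN => ? ?; apply/andP; split; lra.
Qed.

Definition hard_kernel th : kernel R bool Act :=
  fun _ a s' => 1 / 2 + sgb s' * (eta * corr th.1 a.1).

Definition hard_score th (t : Tj) : R :=
  1 / 8 * (second_state t)%:R + eta / 8 * corr th.2 (first_action t).2.

Definition hard_pref th : prefT R bool Act 2 :=
  fun t1 t2 => 1 / 2 + hard_score th t1 - hard_score th t2.

Lemma hard_kernel_bound th s a : 1/4 <= hard_kernel th s a true <= 3/4.
Proof.
have /andP[? ?] := eta_corr_bound th.1 a.1 eta_mP.
by rewrite /hard_kernel /sgb /=; apply/andP; split; lra.
Qed.

Lemma valid_hard_kernel th : valid_kernel (hard_kernel th).
Proof.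
move=> s a; have /andP[? ?] := eta_corr_bound th.1 a.1 eta_mP.
by rewrite big_bool /hard_kernel /sgb /=; split; [case; lra | lra].
Qed.

Lemma hard_pref_bound th t1 t2 : 1/4 <= hard_pref th t1 t2 <= 3/4.
Proof.
have score_bound t : - (1/192) <= hard_score th t <= 1/8 + 1/192.
  have /andP[? ?] := eta_corr_bound th.2 (first_action t).2 eta_mT.
  by rewrite /hard_score; case: (second_state t); rewrite ?mulr1 ?mulr0 ?add0r;
    apply/andP; split; lra.
have /andP[? ?] := score_bound t1; have /andP[? ?] := score_bound t2.
by rewrite /hard_pref; apply/andP; split; lra.
Qed.

Lemma valid_hard_pref th : valid_pref (hard_pref th).
Proof.
move=> t1 t2; have /andP[? ?] := hard_pref_bound th t1 t2.
by split; [apply/andP; split; lra | rewrite /hard_pref; lra].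
Qed.

Definition act_value th a : R := 1 / 8 * hard_kernel th true a true + eta / 8 * corr th.2 a.2.

Definition pol_value th pi : R := \sum_a pi [::] true a * act_value th a.

Definition hamming th a : R := \sum_c (coord th c != coord a c)%:R.

Lemma act_value_sub th a : act_value th th - act_value th a = eta / 4 * hamming th a.
Proof.
have := corr_self_sub R th.1 a.1; have := corr_self_sub R th.2 a.2.
rewrite /act_value /hard_kernel /hamming big_sumType /= /sgb.
move: (corr th.1 _) (corr th.1 _) (corr th.2 _) (corr th.2 _) (\sum_j _) (\sum_j _).
move=> x x' y y' u v ey ex.
by transitivity (eta / 8 * ((x' - x) + (y' - y))); [ring | rewrite ex ey; field].
Qed.

Lemma pref_pol_hard th pi1 pi2 : valid_policy pi1 -> valid_policy pi2 ->
  pref_pol (hard_kernel th) true (hard_pref th) pi1 pi2 =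
  1 / 2 + pol_value th pi1 - pol_value th pi2.
Proof.
have score_pol pi : valid_policy pi ->
    \sum_t traj_prob (hard_kernel th) true pi t * hard_score th t = pol_value th pi.
  move=> pi_valid.
  pose F a (s' : bool) := 1 / 8 * s'%:R + eta / 8 * corr th.2 a.2.
  rewrite (sum_traj_prob2 true _ F pi_valid).
  apply: eq_bigr => a _; congr (_ * _); rewrite big_bool /act_value /F.
  by rewrite (valid_kernel_false _ _ (valid_hard_kernel th)) /=; ring.
move=> pi1_valid pi2_valid; rewrite pref_pol_score_diff //; last exact: valid_hard_kernel.
by congr (_ + _ - _); apply: score_pol.
Qed.

Definition play th : policy R bool Act := fun _ _ a => (a == th)%:R.

Lemma valid_play th : valid_policy (play th).
Proof.
move=> past s; split=> [a|]; first by rewrite /play ler0n.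
by rewrite -(sum_indicator_mul th (fun=> 1)); apply: eq_bigr => a _; rewrite mulr1.
Qed.

Lemma pol_value_play th : pol_value th (play th) = act_value th th.
Proof. exact: sum_indicator_mul. Qed.

Lemma act_value_sub_pol th pi : valid_policy pi ->
  act_value th th - pol_value th pi = eta / 4 * \sum_a pi [::] true a * hamming th a.
Proof.
move=> pi_valid; have [_ pi_sum1] := pi_valid [::] true.
rewrite /pol_value -[act_value th th]mul1r -{1}pi_sum1 mulr_suml -sumrB mulr_sumr.
by apply: eq_bigr => a _; rewrite -mulrBr act_value_sub; ring.
Qed.

Lemma play_winner th : is_winner (hard_kernel th) true (hard_pref th) (play th).
Proof.
split=> [|pi pi_valid]; first exact: valid_play.
rewrite pref_pol_hard //; last exact: valid_play.
rewrite pol_value_play.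
have := act_value_sub_pol th pi_valid.
have : 0 <= eta / 4 * \sum_a pi [::] true a * hamming th a.
  have [pi_ge0 _] := pi_valid [::] true.
  apply: mulr_ge0; first by rewrite divr_ge0 // ltW.
  by apply: sumr_ge0 => a _; rewrite mulr_ge0 // sumr_ge0.
lra.
Qed.

Lemma winner_regret_ge th pis pi : is_winner (hard_kernel th) true (hard_pref th) pis ->
  valid_policy pi ->
  eta / 4 * \sum_a pi [::] true a * hamming th a <=
  pref_pol (hard_kernel th) true (hard_pref th) pis pi - 1 / 2.
Proof.
move=> [pis_valid pis_win] pi_valid; have play_valid := valid_play th.
have := pis_win _ play_valid; rewrite !pref_pol_hard // pol_value_play.
by rewrite -act_value_sub_pol //; lra.
Qed.

Definition wrong_mass th c (pp : policy R bool Act * policy R bool Act) : R :=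
  \sum_a (pp.1 [::] true a + pp.2 [::] true a) * (coord th c != coord a c)%:R.

Definition duel_loss th (pp : policy R bool Act * policy R bool Act) : R :=
  eta / 4 * \sum_c wrong_mass th c pp.

Lemma duel_loss_le_regret th pis pp : is_winner (hard_kernel th) true (hard_pref th) pis ->
  valid_policy pp.1 -> valid_policy pp.2 ->
  duel_loss th pp <= duel_regret (hard_kernel th) true (hard_pref th) pis pp.
Proof.
move=> pis_win pi1_valid pi2_valid.
have := winner_regret_ge pis_win pi1_valid; have := winner_regret_ge pis_win pi2_valid.
suff -> : duel_loss th pp = eta / 4 * \sum_a pp.1 [::] true a * hamming th a +
                       eta / 4 * \sum_a pp.2 [::] true a * hamming th a.
  by rewrite /duel_regret; lra.
rewrite /duel_loss /wrong_mass -mulrDr -big_split exchange_big /=; congr (_ * _).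
by apply: eq_bigr => a _; rewrite -mulrDl mulr_sumr.
Qed.

Lemma wrong_mass_bound th c pp : valid_policy pp.1 -> valid_policy pp.2 ->
  0 <= wrong_mass th c pp <= 2.
Proof.
move=> pi1_valid pi2_valid; have [pi1_ge0 pi1_sum1] := pi1_valid [::] true.
have [pi2_ge0 pi2_sum1] := pi2_valid [::] true.
have pp_ge0 a : 0 <= pp.1 [::] true a + pp.2 [::] true a by rewrite addr_ge0.
apply/andP; split; first by apply: sumr_ge0 => a _; rewrite mulr_ge0.
apply: (@le_trans _ _ (\sum_a (pp.1 [::] true a + pp.2 [::] true a))).
  by apply: ler_sum => a _; rewrite ler_piMr //; case: (_ != _).
by rewrite big_split /= pi1_sum1 pi2_sum1.
Qed.

Lemma wrong_mass_flip th c pp : valid_policy pp.1 -> valid_policy pp.2 ->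
  wrong_mass (flip_coord th c) c pp = 2 - wrong_mass th c pp.
Proof.
move=> pi1_valid pi2_valid; have [_ pi1_sum1] := pi1_valid [::] true.
have [_ pi2_sum1] := pi2_valid [::] true.
have -> : 2 = \sum_a (pp.1 [::] true a + pp.2 [::] true a).
  by rewrite big_split /= pi1_sum1 pi2_sum1.
rewrite /wrong_mass coord_flip -sumrB; apply: eq_bigr => a _.
by case: (coord th c); case: (coord a c); rewrite /=; ring.
Qed.

Lemma eta_mul_bound (x : R) : -2 <= x <= 2 -> - (2 * eta) <= eta * x <= 2 * eta.
Proof.
move=> /andP[lo hi]; have eta_ge0 := ltW eta_gt0.
have := ler_wpM2l eta_ge0 lo; have := ler_wpM2l eta_ge0 hi.
by move=> ? ?; apply/andP; split; lra.
Qed.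

Lemma hard_kernel_flip_close th c s a :
  - (2 * eta) <= hard_kernel (flip_coord th c) s a true - hard_kernel th s a true <= 2 * eta.
Proof.
rewrite /hard_kernel /sgb /=.
set x := corr _ a.1; set y := corr _ a.1.
rewrite (_ : _ - _ = eta * (x - y)); last by ring.
apply: eta_mul_bound; rewrite {}/x {}/y.
by case: c => j /=; [exact: corr_flip_at | rewrite subrr; apply/andP; split; lra].
Qed.

Lemma hard_pref_flip_close th c t1 t2 :
  - (2 * eta) <= hard_pref (flip_coord th c) t1 t2 - hard_pref th t1 t2 <= 2 * eta.
Proof.
pose D (t : Tj) : R := corr (flip_coord th c).2 (first_action t).2 - corr th.2 (first_action t).2.
have D_bound t : -2 <= D t <= 2.
  by rewrite /D; case: c {D} => j /=; [rewrite subrr; apply/andP; split; lra | exact: corr_flip_at].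
rewrite (_ : _ - _ = eta * ((D t1 - D t2) / 8)); last by rewrite /hard_pref /hard_score /D; ring.
apply: eta_mul_bound; have /andP[? ?] := D_bound t1; have /andP[? ?] := D_bound t2.
by apply/andP; split; lra.
Qed.

Local Notation expect_at th alg k f :=
  (expect (episode_prob (hard_kernel th) true (hard_pref th) alg) k [::] f).

Section Algorithm.
Variable alg : algo R bool Act 2.
Hypothesis alg_valid : forall h, valid_policy (alg h).1 /\ valid_policy (alg h).2.

Lemma wrong_mass_flip_pair th c k : 576 * (k%:R * eta ^+ 2) <= 1 ->
  1 <= expect_at th alg k (fun h => wrong_mass th c (alg h)) +
       expect_at (flip_coord th c) alg k (fun h => wrong_mass (flip_coord th c) c (alg h)).
Proof.
move=> k_small; set th' := flip_coord th c.
(* [f] has almost the same expectation under [th] and [th'], while the wrong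
   masses for [th] and [th'] add up to [2]. *)
pose f h := wrong_mass th c (alg h) / 2.
have f01 h : 0 <= f h <= 1.
  have [pi1_valid pi2_valid] := alg_valid h.
  have /andP[? ?] := wrong_mass_bound th c pi1_valid pi2_valid.
  by rewrite /f; apply/andP; split; lra.
have close := sqr_expect_episode_close true (valid_hard_kernel th) (valid_hard_kernel th')
  (valid_hard_pref th) (hard_kernel_bound th) (hard_pref_bound th)
  (hard_kernel_flip_close th c) (hard_pref_flip_close th c) alg_valid [::] f01.
have {}close : (expect_at th' alg k f - expect_at th alg k f) ^+ 2 <= 1 / 4.
  by apply: close; rewrite exprMn; nra.
have -> : expect_at th alg k (fun h => wrong_mass th c (alg h)) = 2 * expect_at th alg k f.
  by rewrite -expectZ; apply: eq_expect => h; rewrite /f; field.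
have -> : expect_at th' alg k (fun h => wrong_mass th' c (alg h)) =
    -2 * expect_at th' alg k f + 2.
  transitivity (expect_at th' alg k (fun h => -2 * f h + 2)).
    apply: eq_expect => h; have [pi1_valid pi2_valid] := alg_valid h.
    by rewrite wrong_mass_flip // /f; field.
  by rewrite expect_lin (expect_cst (episode_prob_sum1 true (valid_hard_kernel th') _ alg_valid)).
by move: close; move: (expect_at th' alg k f) (expect_at th alg k f) => x y; nra.
Qed.

Lemma sum_expect_loss_ge k : 576 * (k%:R * eta ^+ 2) <= 1 ->
  #|{: Act}|%:R * (eta / 4 * ((mP + mT)%:R / 2)) <=
  \sum_th expect_at th alg k (fun h => duel_loss th (alg h)).
Proof.
move=> k_small.
under eq_bigr do rewrite expectZ expect_sum.
rewrite -mulr_sumr mulrCA; apply: ler_wpM2l; first by rewrite divr_ge0 // ltW.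
rewrite exchange_big /= [leLHS](_ : _ = \sum_(c : 'I_mP + 'I_mT) #|{: Act}|%:R / 2); last first.
  by rewrite sumr_const card_sum !card_ord -mulr_natr; ring.
apply: ler_sum => c _.
pose X th := expect_at th alg k (fun h => wrong_mass th c (alg h)).
(* Assouad's pairing of each [th] with its flip at [c]. *)
have sum_flip : \sum_th X (flip_coord th c) = \sum_th X th.
  rewrite (reindex_inj (inv_inj (flip_coordK c))); apply: eq_bigr => th _.
  by congr X; exact: flip_coordK.
have : \sum_(th : Act) (1 : R) <= \sum_th X th + \sum_th X th.
  rewrite -{2}sum_flip -big_split; apply: ler_sum => th _.
  exact: wrong_mass_flip_pair.
by rewrite sumr_const -mulr_natl mulr1 /X; lra.
Qed.

Lemma expect_loss_le_regret th pis n : is_winner (hard_kernel th) true (hard_pref th) pis ->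
  \sum_(k < n) expect_at th alg k (fun h => duel_loss th (alg h)) <=
  exp_regret_from (hard_kernel th) true (hard_pref th) pis alg n [::].
Proof.
move=> pis_win; rewrite exp_regret_fromE; apply: ler_sum => k _.
apply: ler_expect => [h e|h].
  exact: (episode_prob_ge0 true (valid_hard_kernel th) (valid_hard_pref th) alg_valid h e).
by have [pi1_valid pi2_valid] := alg_valid h; exact: duel_loss_le_regret.
Qed.

End Algorithm.

Theorem hard_instance_regret (U : finType) (mu : U -> R) (alg : U -> algo R bool Act 2) K :
  (forall u, 0 <= mu u) -> \sum_u mu u = 1 ->
  (forall u h, valid_policy (alg u h).1 /\ valid_policy (alg u h).2) ->
  576 * (K%:R * eta ^+ 2) <= 1 ->
  exists th, forall pis, is_winner (hard_kernel th) true (hard_pref th) pis ->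
    K%:R * (eta / 4 * ((mP + mT)%:R / 2)) <=
    exp_regret mu alg (hard_kernel th) true (hard_pref th) pis K.
Proof.
move=> mu_ge0 mu_sum1 alg_valid K_small.
set b := eta / 4 * _.
pose V th := \sum_u mu u * \sum_(k < K) expect_at th (alg u) k (fun h => duel_loss th (alg u h)).
have : #|{: Act}|%:R * (K%:R * b) <= \sum_th V th.
  rewrite [leLHS](_ : _ = \sum_u mu u * \sum_(k < K) #|{: Act}|%:R * b); last first.
    by rewrite sumr_const card_ord -mulr_suml mu_sum1 -mulr_natl; ring.
  rewrite exchange_big; apply: ler_sum => u _; rewrite -[leRHS]mulr_sumr.
  apply: ler_wpM2l => //.
  rewrite exchange_big; apply: ler_sum => k _; apply: sum_expect_loss_ge => //.
  by apply: le_trans K_small; rewrite ler_pM2l // ler_pM2r ?exprn_gt0 // ler_nat ltnW.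
move=> /(exists_ge_average ([ffun=> true], [ffun=> true])) [th V_th].
exists th => pis pis_win; apply: (le_trans V_th); apply: ler_sum => u _.
by apply: ler_wpM2l => //; exact: expect_loss_le_regret.
Qed.

End HardInstance.
Arguments play {R mP mT}.

Section LiftRow.
Variable R : realType.

Definition lift_row m (x0 : R) (v : 'I_m -> R) : 'rV[R]_m.+1 :=
  \row_i oapp v x0 (unlift ord0 i).

Lemma sum_unlift (V : nmodType) m (F : option 'I_m -> V) :
  \sum_(i < m.+1) F (unlift ord0 i) = F None + \sum_j F (Some j).
Proof.
rewrite big_ord_recl unlift_none; congr (_ + _).
by apply: eq_bigr => j _; rewrite liftK.
Qed.

Lemma dotr_lift_row m x0 y0 (v w : 'I_m -> R) :
  dotr (lift_row x0 v) (lift_row y0 w) = x0 * y0 + \sum_j v j * w j.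
Proof.
rewrite /dotr (eq_bigr (fun i => oapp v x0 (unlift ord0 i) * oapp w y0 (unlift ord0 i))).
  by rewrite (sum_unlift (fun o => oapp v x0 o * oapp w y0 o)).
by move=> i _; rewrite !mxE.
Qed.

Lemma sqnorm_lift_row m x0 (v : 'I_m -> R) :
  sqnorm (lift_row x0 v) = x0 ^+ 2 + \sum_j v j ^+ 2.
Proof.
rewrite /sqnorm (eq_bigr (fun i => oapp v x0 (unlift ord0 i) ^+ 2)).
  by rewrite (sum_unlift (fun o => oapp v x0 o ^+ 2)).
by move=> i _; rewrite !mxE.
Qed.

Lemma sum_scale_lift_row (I : finType) m (c x0 : I -> R) (v : I -> 'I_m -> R) :
  \sum_i c i *: lift_row (x0 i) (v i) =
  lift_row (\sum_i c i * x0 i) (fun j => \sum_i c i * v i j).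
Proof.
apply/rowP => k; rewrite summxE mxE.
under eq_bigr do rewrite !mxE.
by case: (unlift ord0 k).
Qed.

End LiftRow.

Section LinearRepresentation.
Variables (R : realType) (mP mT : nat) (eta : R).
Local Notation Act := (sign_pair mP mT).
Local Notation Tj := (Traj bool Act 2).

Lemma sqrt_card_neq0 m (j : 'I_m) : Num.sqrt (m%:R : R) != 0.
Proof. by rewrite sqrtr_eq0 -ltNge ltr0n (leq_ltn_trans _ (ltn_ord j)). Qed.

Definition psi_hard (s : bool) (a : Act) (s' : bool) : 'rV[R]_mP.+1 :=
  lift_row (1 / 4) (fun j => sgb s' * (eta * Num.sqrt mP%:R) * sgb (a.1 j)).

Definition theta_hard (th : Act) : 'rV[R]_mP.+1 :=
  lift_row 2 (fun j => sgb (th.1 j) / Num.sqrt mP%:R).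

Definition phi_hard (t1 t2 : Tj) : 'rV[R]_mT.+1 :=
  lift_row (1 / 2 + 1 / 8 * ((second_state t1)%:R - (second_state t2)%:R))
    (fun j => eta / 8 * Num.sqrt mT%:R *
              (sgb ((first_action t1).2 j) - sgb ((first_action t2).2 j))).

Definition vt_hard (th : Act) : 'rV[R]_mT.+1 :=
  lift_row 1 (fun j => sgb (th.2 j) / Num.sqrt mT%:R).

Lemma lin_mix_hard th : lin_mix psi_hard (theta_hard th) = hard_kernel eta th.
Proof.
apply: functional_extensionality => s; apply: functional_extensionality => a.
apply: functional_extensionality => s'.
rewrite /lin_mix dotr_lift_row /hard_kernel /corr !mulr_sumr; congr (_ + _); first by field.
by apply: eq_bigr => j _; have := sqrt_card_neq0 j; move=> ?; field.
Qed.

Lemma lin_pref_hard th : lin_pref phi_hard (vt_hard th) = hard_pref eta th.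
Proof.
apply: functional_extensionality => t1; apply: functional_extensionality => t2.
rewrite /lin_pref dotr_lift_row /hard_pref /hard_score /corr.
rewrite (eq_bigr (fun j => eta / 8 * (sgb (th.2 j) * sgb ((first_action t1).2 j)) -
                             eta / 8 * (sgb (th.2 j) * sgb ((first_action t2).2 j)))).
  by rewrite sumrB -!mulr_sumr; ring.
by move=> j _; have := sqrt_card_neq0 j; move=> ?; field.
Qed.

Lemma sqnorm_sign_row m x0 (b : {ffun 'I_m -> bool}) :
  sqnorm (lift_row x0 (fun j => sgb (b j) / Num.sqrt (m%:R : R))) <= x0 ^+ 2 + 1.
Proof.
rewrite sqnorm_lift_row lerD2l.
under eq_bigr do rewrite expr_div_n sqr_sgb sqr_sqrtr ?ler0n //.
rewrite sumr_const card_ord; case: m b => [|m] b; first by rewrite mulr0n ler01.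
by rewrite -[_ *+ _]mulr_natl mul1r divff // pnatr_eq0.
Qed.

Lemma psi_hard_normalized : 0 <= eta -> 24 * (eta * mP%:R) <= 1 -> psi_normalized psi_hard.
Proof.
move=> eta_ge0 eta_mP s a V V01.
have /andP[V1_ge0 V1_le1] := V01 true; have /andP[V0_ge0 V0_le1] := V01 false.
rewrite sum_scale_lift_row sqnorm_lift_row big_bool /=.
under eq_bigr do rewrite big_bool /= /sgb /=.
have tail j : (V true * (1 * (eta * Num.sqrt mP%:R) * sgb (a.1 j)) +
               V false * (-1 * (eta * Num.sqrt mP%:R) * sgb (a.1 j))) ^+ 2 <= eta ^+ 2 * mP%:R.
  rewrite (_ : _ ^+ 2 = (V true - V false) ^+ 2 * sgb (a.1 j) ^+ 2 *
                         eta ^+ 2 * Num.sqrt mP%:R ^+ 2); last by ring.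
  rewrite sqr_sgb mulr1 sqr_sqrtr ?ler0n // -mulrA.
  apply: ler_piMl; first by rewrite mulr_ge0 ?sqr_ge0 ?ler0n.
  by rewrite expr2; nra.
apply: (@le_trans _ _ ((V true * (1 / 4) + V false * (1 / 4)) ^+ 2 +
                      \sum_(j < mP) eta ^+ 2 * mP%:R)).
  by rewrite lerD2l; apply: ler_sum => j _; exact: tail.
rewrite sumr_const card_ord (_ : (eta ^+ 2 * mP%:R) *+ mP = (eta * mP%:R) ^+ 2); last first.
  by rewrite -[LHS]mulr_natr; ring.
have : 0 <= eta * mP%:R by rewrite mulr_ge0 ?ler0n.
by rewrite !expr2; nra.
Qed.

End LinearRepresentation.
Arguments theta_hard {R mP mT}.
Arguments vt_hard {R mP mT}.

(* [eta] balances the regret [K eta] against the information [K eta^2]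
   gathered about each coordinate. *)
Definition hard_eta (R : realType) (K : nat) : R := 1 / (24 * Num.sqrt K%:R).

Section Scaling.
Variables (R : realType) (K : nat).
Hypothesis K_gt0 : (0 < K)%N.
Local Notation sK := (Num.sqrt (K%:R : R)).
Local Notation eta := (hard_eta R K).

Lemma sqrtK_gt0 : 0 < sK.
Proof. by rewrite sqrtr_gt0 ltr0n. Qed.

Lemma hard_eta_gt0 : 0 < eta.
Proof. by rewrite divr_gt0 // mulr_gt0 // sqrtK_gt0. Qed.

Lemma hard_eta_nat_le m : (m ^ 2 <= K)%N -> 24 * (eta * m%:R) <= 1.
Proof.
move=> m2_le; have sK_gt0 := sqrtK_gt0.
have m_le : m%:R <= sK.
  by rewrite -ler_sqr ?nnegrE ?ler0n ?sqrtr_ge0 // sqr_sqrtr ?ler0n // -natrX ler_nat.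
rewrite (_ : 24 * _ = m%:R / sK); last by rewrite /hard_eta; field; rewrite gt_eqF.
by rewrite ler_pdivrMr // mul1r.
Qed.

Lemma hard_eta_sqr_le : 576 * (K%:R * eta ^+ 2) <= 1.
Proof.
have sK_gt0 := sqrtK_gt0.
rewrite (_ : 576 * _ = K%:R / sK ^+ 2); last by rewrite /hard_eta; field; rewrite gt_eqF.
by rewrite sqr_sqrtr ?ler0n // divff // pnatr_eq0 -lt0n.
Qed.

Lemma hard_eta_regret (a b : nat) : (0 < a)%N -> (0 < b)%N ->
  1 / 384 * (a.+1%:R * sK + b.+1%:R * sK) <= K%:R * (eta / 4 * ((a + b)%:R / 2)).
Proof.
move=> a_gt0 b_gt0; have sK_gt0 := sqrtK_gt0.
rewrite [leRHS](_ : _ = sK * (a + b)%:R / 192); last first.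
  by rewrite /hard_eta -{1}(sqr_sqrtr (ler0n _ K)); field; rewrite gt_eqF.
have : 0 <= sK * (a%:R - 1 + (b%:R - 1)).
  by apply: mulr_ge0; [exact: ltW | apply: addr_ge0; rewrite subr_ge0 ler1n].
by rewrite natrD -(natr1 a) -(natr1 b); nra.
Qed.

End Scaling.

Theorem corollary4p6 (R : realType) :
  exists (c B : R) (d0 : nat) (K0 : nat -> nat -> nat),
  0 < c /\ 0 < B /\
  forall (dP dT K : nat), (d0 <= dP)%N -> (d0 <= dT)%N -> (K0 dP dT <= K)%N ->
  exists (S A : finType) (H : nat) (s1 : S)
         (psi : S -> A -> S -> 'rV[R]_dP)
         (phi : Traj S A H -> Traj S A H -> 'rV[R]_dT),
    psi_normalized psi /\
    forall (U : finType) (mu : U -> R) (alg : U -> algo R S A H),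
      (forall u, 0 <= mu u) -> \sum_u mu u = 1 ->
      (forall u hist, valid_policy (alg u hist).1 /\ valid_policy (alg u hist).2) ->
      exists (theta : 'rV[R]_dP) (vt : 'rV[R]_dT),
        (sqnorm theta <= B ^+ 2 /\ sqnorm vt <= B ^+ 2) /\ [/\
            valid_kernel (lin_mix psi theta),
            valid_pref (lin_pref phi vt),
            (exists pis, is_winner (lin_mix psi theta) s1 (lin_pref phi vt) pis) &
            forall pis, is_winner (lin_mix psi theta) s1 (lin_pref phi vt) pis ->
              c * (dP%:R * Num.sqrt K%:R + dT%:R * Num.sqrt K%:R)
                <= exp_regret mu alg (lin_mix psi theta) s1 (lin_pref phi vt) pis K].
Proof.
exists (1 / 384), 3, 2%N, (fun dP dT => ((dP + dT) ^ 2)%N); split; first lra; split; first lra.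
move=> [|mP] [|mT] K // mP_gt0 mT_gt0 K_large.
have mP2_le : (mP ^ 2 <= K)%N by nia.
have mT2_le : (mT ^ 2 <= K)%N by nia.
have K_gt0 : (0 < K)%N by nia.
have eta_gt0 := hard_eta_gt0 R K_gt0.
have eta_mP := hard_eta_nat_le R K_gt0 mP2_le.
have eta_mT := hard_eta_nat_le R K_gt0 mT2_le.
exists bool, (sign_pair mP mT), 2%N, true, (psi_hard (hard_eta R K)), (phi_hard (hard_eta R K)).
split=> [|U mu alg mu_ge0 mu_sum1 alg_valid]; first by apply: psi_hard_normalized => //; exact: ltW.
have [th regret_th] := hard_instance_regret eta_gt0 eta_mP eta_mT mu_ge0 mu_sum1 alg_valid
  (hard_eta_sqr_le R K_gt0).
exists (theta_hard th), (vt_hard th); rewrite lin_mix_hard lin_pref_hard.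
split; first by split; apply: le_trans (sqnorm_sign_row _ _) _; rewrite !expr2; lra.
split; [exact: valid_hard_kernel | exact: valid_hard_pref | |].
  by exists (play th); exact: play_winner.
by move=> pis pis_win; apply: le_trans (regret_th pis pis_win); exact: hard_eta_regret.
Qed.
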